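(* Let $S=S^T\in\mathbb{R}^{n\times n}$ and $T=\begin{pmatrix}I&S\\ 0&I\end{pmatrix}\in\mathbb{R}^{2n\times 2n}$, and let $h>0$. Then each of the linear maps $x\mapsto Tx$ and $x\mapsto T^Tx$ on $\mathbb{R}^{2n}$ equals a P-SympNet of degree $2$ with time step $h$ and at most $n$ layers.
   Context: $x=(p,q)\in\mathbb{R}^{2n}$, $J=\begin{pmatrix}0&-I\\ I&0\end{pmatrix}$. A P-SympNet of degree $d$ with $k$ layers and time step $h$ is a composition $\phi^{H_k}_h\circ\cdots\circ\phi^{H_1}_h$ where $H_i(x)=\alpha_i(w_i^Tx)$ with $w_i\in\mathbb{R}^{2n}$ and $\alpha_i(z)=\sum_{j=1}^d a_{ij}z^j$ a real univariate polynomial; each layer is the exact flow of $\dot x=J\nabla H_i(x)$, given explicitly by $\phi^{H_i}_h(x)=x+h\,\alpha_i'(w_i^Tx)\,Jw_i$. *)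

From mathcomp Require Import all_boot all_order all_algebra.
From mathcomp Require Import reals.
Set Implicit Arguments. Unset Strict Implicit. Unset Printing Implicit Defensive.
Import Order.TTheory GRing.Theory Num.Theory.
Local Open Scope ring_scope.

Section PSymp.
Variable R : realType.
Variable n : nat.

(* J = [[0, -I], [I, 0]] on R^{2n}, x = (p, q) as a column vector of size n + n *)
Definition Jmx : 'M[R]_(n + n) := block_mx 0 (- 1%:M) 1%:M 0.

Definition Tmx (S : 'M[R]_n) : 'M[R]_(n + n) := block_mx 1%:M S 0 1%:M.

Definition is_alpha (d : nat) (alpha : {poly R}) : Prop :=
  alpha`_0 = 0 /\ (size alpha <= d.+1)%N.

(* One layer phi_h^{H}, H(x) = alpha(w^T x):
   phi(x) = x + h * alpha'(w^T x) * J w *)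
Definition psymp_layer (h : R) (w : 'cV[R]_(n + n)) (alpha : {poly R})
  (x : 'cV[R]_(n + n)) : 'cV[R]_(n + n) :=
  x + (h * (alpha^`()).[(w^T *m x) 0 0]) *: (Jmx *m w).

(* A P-SympNet is a list of layers [(w_1, alpha_1); ...; (w_k, alpha_k)];
   it computes phi_k o ... o phi_1 (first layer applied first). *)
Definition psympnet_eval (h : R) (layers : seq ('cV[R]_(n + n) * {poly R}))
  (x : 'cV[R]_(n + n)) : 'cV[R]_(n + n) :=
  foldl (fun y l => psymp_layer h l.1 l.2 y) x layers.

Definition is_psympnet (d : nat) (layers : seq ('cV[R]_(n + n) * {poly R})) : Prop :=
  forall l, l \in layers -> is_alpha d l.2.

End PSymp.

(* A symmetric S is a sum of at most n rank-one terms c_k v_k v_k^T (obtained by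
   repeatedly subtracting (Sv)(Sv)^T / v^T S v, which lowers the rank).  The
   layer with w = (0, v) and alpha(z) = a z^2 is the shear (p, q) |-> (p - 2ha
   (v^T q) v, q), so choosing a = -c/(2h) realises p += c (v^T q) v; composing
   one such layer per term gives x |-> T x.  Layers with w = (v, 0) give T^T. *)
From mathcomp Require Import all_boot all_order all_algebra.
From mathcomp Require Import reals.
From mathcomp Require Import ring.

Set Implicit Arguments.
Unset Strict Implicit.
Unset Printing Implicit Defensive.
Import Order.TTheory GRing.Theory Num.Theory.
Local Open Scope ring_scope.

Lemma mx_neq0_entry (F : nzRingType) m n (A : 'M[F]_(m, n)) :
  A != 0 -> exists i j, A i j != 0.
Proof.
move=> nzA; have /existsP[i /existsP[j Aij]] : [exists i, exists j, A i j != 0].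
  apply: contraNT nzA => /existsPn A0; apply/eqP/matrixP => i j.
  by move/existsPn: (A0 i) => /(_ j); rewrite negbK mxE => /eqP.
by exists i, j.
Qed.

Lemma quad_form_delta (F : nzRingType) n (A : 'M[F]_n) i j :
  ((delta_mx i 0)^T *m A *m delta_mx j 0 : 'M_1) 0 0 = A i j.
Proof. by rewrite trmx_delta -rowE -colE !mxE. Qed.

Lemma sym_quad_form_polar (F : comNzRingType) n (S : 'M[F]_n) i j :
  S^T = S ->
  let e k : 'cV[F]_n := delta_mx k 0 in
  ((e i + e j)^T *m S *m (e i + e j)) 0 0 = S i i + S j j + S i j *+ 2.
Proof.
move=> sS e; have entryD (A B : 'M[F]_1) : (A + B) 0 0 = A 0 0 + B 0 0 by rewrite mxE.
rewrite mulmxDr linearD /= !mulmxDl !entryD !quad_form_delta.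
have -> : S j i = S i j by rewrite -[in LHS]sS mxE.
by rewrite mulr2n; ring.
Qed.

Lemma sym_quad_form_neq0 (F : numFieldType) n (S : 'M[F]_n) :
  S^T = S -> S != 0 -> exists v : 'cV[F]_n, (v^T *m S *m v) 0 0 != 0.
Proof.
move=> sS /mx_neq0_entry[i [j Sij]].
have [Sii | /negPn/eqP Sii] := boolP (S i i != 0).
  by exists (delta_mx i 0); rewrite quad_form_delta.
have [Sjj | /negPn/eqP Sjj] := boolP (S j j != 0).
  by exists (delta_mx j 0); rewrite quad_form_delta.
exists (delta_mx i 0 + delta_mx j 0).
by rewrite sym_quad_form_polar // Sii Sjj !add0r mulrn_eq0.
Qed.

Section RankOneDeflation.
Variables (F : fieldType) (n : nat) (S : 'M[F]_n) (v : 'cV[F]_n).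
Hypothesis sS : S^T = S.
Let c := (v^T *m S *m v) 0 0.
Let u := S *m v.
Hypothesis c_neq0 : c != 0.

Let tr_u : u^T = v^T *m S. Proof. by rewrite /u trmx_mul sS. Qed.

Definition rank1_deflation := S - c^-1 *: (u *m u^T).

Lemma rank1_deflation_sym : rank1_deflation^T = rank1_deflation.
Proof. by rewrite /rank1_deflation linearB /= linearZ /= trmx_mul trmxK sS. Qed.

Lemma rank1_deflation_mulv : rank1_deflation *m v = 0.
Proof.
have uTv : u^T *m v = c%:M by rewrite tr_u [LHS]mx11_scalar.
rewrite /rank1_deflation mulmxBl -scalemxAl -mulmxA uTv mul_mx_scalar.
by rewrite scalerA mulVf // scale1r subrr.
Qed.

Lemma rank1_deflation_rank : (\rank rank1_deflation < \rank S)%N.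
Proof.
have defD : rank1_deflation = (1%:M - c^-1 *: (u *m v^T)) *m S.
  by rewrite /rank1_deflation mulmxBl mul1mx -scalemxAl tr_u !mulmxA.
apply: rank_ltmx; rewrite ltmxE defD submxMl /=; apply/negP => /submxP[D defS].
suff u0 : u = 0 by move: c_neq0; rewrite /c -mulmxA -/u u0 mulmx0 mxE eqxx.
by rewrite /u defS -mulmxA -defD rank1_deflation_mulv mulmx0.
Qed.

End RankOneDeflation.

Definition rank1_sum (F : nzRingType) n (L : seq (F * 'cV[F]_n)) : 'M[F]_n :=
  \sum_(l <- L) l.1 *: (l.2 *m l.2^T).

Lemma outer_mulmx (F : comNzRingType) n (v q : 'cV[F]_n) :
  v *m v^T *m q = (v^T *m q) 0 0 *: v.
Proof. by rewrite -mulmxA {1}[v^T *m q]mx11_scalar mul_mx_scalar. Qed.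

Lemma sym_rank1_decomposition (F : numFieldType) n k (S : 'M[F]_n) :
  S^T = S -> (\rank S <= k)%N ->
  exists L : seq (F * 'cV[F]_n), (size L <= k)%N /\ S = rank1_sum L.
Proof.
elim: k S => [|k IHk] S sS rankS.
  exists [::]; rewrite /rank1_sum big_nil; split=> //.
  by apply/eqP; rewrite -mxrank_eq0 -leqn0.
have [-> | nzS] := eqVneq S 0; first by exists [::]; rewrite /rank1_sum big_nil.
have [v c_neq0] := sym_quad_form_neq0 sS nzS.
have rankD : (\rank (rank1_deflation S v) <= k)%N.
  by rewrite -ltnS (leq_trans (rank1_deflation_rank sS c_neq0)).
have [L [sizeL defD]] := IHk _ (rank1_deflation_sym v sS) rankD.
exists ((((v^T *m S *m v) 0 0)^-1, S *m v) :: L); split=> //.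
by rewrite /rank1_sum big_cons -/(rank1_sum L) -defD /rank1_deflation addrC subrK.
Qed.

Section ShearNets.
Variables (R : realType) (n : nat).
Implicit Types (h a : R) (v p q : 'cV[R]_n) (L : seq (R * 'cV[R]_n)).

Lemma psymp_layer_0v h v (alpha : {poly R}) p q :
  psymp_layer h (col_mx 0 v) alpha (col_mx p q) =
  col_mx (p - (h * (alpha^`()).[(v^T *m q) 0 0]) *: v) q.
Proof.
rewrite /psymp_layer /Jmx mul_block_col tr_col_mx mul_row_col linear0 mul0mx add0r.
rewrite !mulmx0 mul0mx !add0r mulNmx mul1mx scale_col_mx add_col_mx.
by rewrite scaler0 addr0 scalerN.
Qed.

Lemma psymp_layer_v0 h v (alpha : {poly R}) p q :
  psymp_layer h (col_mx v 0) alpha (col_mx p q) =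
  col_mx p (q + (h * (alpha^`()).[(v^T *m p) 0 0]) *: v).
Proof.
rewrite /psymp_layer /Jmx mul_block_col tr_col_mx mul_row_col linear0 mul0mx addr0.
by rewrite !mulmx0 mul0mx mul1mx !addr0 scale_col_mx add_col_mx scaler0 addr0.
Qed.

Lemma horner_deriv_scaleX2 a (z : R) : ((a *: 'X^2)^`()).[z] = a * (z *+ 2).
Proof. by rewrite derivZ derivXn hornerZ hornerMn expr1 hornerX. Qed.

Lemma psympnet_quadratic (T : eqType) (w : T -> 'cV[R]_(n + n)) (a : T -> R)
    (s : seq T) :
  is_psympnet 2 [seq (w t, a t *: 'X^2) | t <- s].
Proof.
move=> l /mapP [t _ ->]; split; first by rewrite coefZ coefXn mulr0.
by rewrite (leq_trans (size_scale_leq _ _)) // size_polyXn.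
Qed.

Definition upper_shear_net h L :=
  [seq (col_mx (0 : 'cV_n) l.2, - (l.1 / (h *+ 2)) *: 'X^2) | l <- L].

Definition lower_shear_net h L :=
  [seq (col_mx l.2 (0 : 'cV_n), (l.1 / (h *+ 2)) *: 'X^2) | l <- L].

Lemma upper_shear_netE h L p q : h != 0 ->
  psympnet_eval h (upper_shear_net h L) (col_mx p q) =
  col_mx (p + rank1_sum L *m q) q.
Proof.
move=> h_neq0; elim: L p => [|[c v] L IHL] p /=.
  by rewrite /rank1_sum big_nil mul0mx addr0.
rewrite psymp_layer_0v horner_deriv_scaleX2 IHL /rank1_sum big_cons /= mulmxDl.
rewrite -scalemxAl outer_mulmx scalerA addrA; congr (col_mx (_ + _ + _) _).
by rewrite -scaleNr; congr (_ *: _); field.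
Qed.

Lemma lower_shear_netE h L p q : h != 0 ->
  psympnet_eval h (lower_shear_net h L) (col_mx p q) =
  col_mx p (q + rank1_sum L *m p).
Proof.
move=> h_neq0; elim: L q => [|[c v] L IHL] q /=.
  by rewrite /rank1_sum big_nil mul0mx addr0.
rewrite psymp_layer_v0 horner_deriv_scaleX2 IHL /rank1_sum big_cons /= mulmxDl.
rewrite -scalemxAl outer_mulmx scalerA addrA; congr (col_mx _ (_ + _ + _)).
by congr (_ *: _); field.
Qed.

Lemma Tmx_mul_col_mx (S : 'M[R]_n) p q :
  Tmx S *m col_mx p q = col_mx (p + S *m q) q.
Proof. by rewrite /Tmx mul_block_col !mul1mx mul0mx add0r. Qed.

Lemma trTmx_mul_col_mx (S : 'M[R]_n) p q : S^T = S ->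
  (Tmx S)^T *m col_mx p q = col_mx p (q + S *m p).
Proof.
move=> sS; rewrite /Tmx tr_block_mx tr_scalar_mx trmx0 sS mul_block_col.
by rewrite !mul1mx mul0mx addr0 addrC.
Qed.

End ShearNets.

Theorem mainTheorem9 (R : realType) (n : nat) (S : 'M[R]_n) (h : R) :
  S^T = S -> 0 < h ->
  (exists layers : seq ('cV[R]_(n + n) * {poly R}),
      is_psympnet 2 layers /\ (size layers <= n)%N /\
      forall x : 'cV[R]_(n + n), psympnet_eval h layers x = Tmx S *m x) /\
  (exists layers : seq ('cV[R]_(n + n) * {poly R}),
      is_psympnet 2 layers /\ (size layers <= n)%N /\
      forall x : 'cV[R]_(n + n), psympnet_eval h layers x = (Tmx S)^T *m x).
Proof.
move=> sS h_gt0; have h_neq0 : h != 0 by rewrite gt_eqF.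
have [L [sizeL defS]] := sym_rank1_decomposition sS (rank_leq_col S).
split; [exists (upper_shear_net h L) | exists (lower_shear_net h L)].
- split; first exact: psympnet_quadratic.
  split; first by rewrite size_map.
  by move=> x; rewrite -[x]vsubmxK upper_shear_netE // Tmx_mul_col_mx defS.
- split; first exact: psympnet_quadratic.
  split; first by rewrite size_map.
  by move=> x; rewrite -[x]vsubmxK lower_shear_netE // trTmx_mul_col_mx // defS.
Qed.
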